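(* Let $H \in \mathcal{M}_n(\mathbb{C})$ be a Hermitian matrix whose largest eigenvalue (spectral radius) is simple. Then $H$ has exactly $k$ distinct eigenvalues, where $2 \le k \le n$, if and only if there are $k$ distinct real numbers $\lambda_1, \lambda_2, \ldots, \lambda_k$ such that (i) $H - \lambda_i I$ is a singular matrix for every $2 \le i \le k$; and (ii) $\prod_{i=2}^{k}(H - \lambda_i I) = b\,\mathbf{y}\mathbf{y}^\ast$ and $H\mathbf{y} = \lambda_1 \mathbf{y}$ for some $b \in \mathbb{C}\setminus\{0\}$ and some $\mathbf{y} \in \mathbb{C}^n \setminus \{\mathbf{0}\}$. Moreover, in this case $\lambda_1, \lambda_2, \ldots, \lambda_k$ are exactly the $k$ distinct eigenvalues of $H$.
   Context: $\mathcal{M}_n(\mathbb{C})$ is the set of $n\times n$ complex matrices, $I$ the identity matrix, $\mathbf{y}^\ast = \overline{\mathbf{y}}^T$. The spectral radius of a Hermitian matrix here means its largest eigenvalue; it is simple if its algebraic multiplicity is $1$. *)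

From HB Require Import structures.
From mathcomp Require Import all_boot all_order all_algebra.
Set Implicit Arguments. Unset Strict Implicit. Unset Printing Implicit Defensive.
Import Order.TTheory GRing.Theory Num.Theory.
Local Open Scope ring_scope.

(* Complex numbers are modelled by an arbitrary numClosedFieldType C
   (e.g. algC, or complex R for a real closed field R).               *)

Definition has_k_distinct_eigenvalues (C : numClosedFieldType) (n k : nat)
  (H : 'M[C]_n) : Prop :=
  exists s : seq C, [/\ uniq s, size s = k & forall a, eigenvalue H a <-> a \in s].

Definition simple_spectral_radius (C : numClosedFieldType) (n : nat)
  (H : 'M[C]_n) : Prop :=
  exists rho : C, [/\ eigenvalue H rho,
    (forall a, eigenvalue H a -> a <= rho)
    & mup rho (char_poly H) = 1%N].

Definition eig_conditions (C : numClosedFieldType) (n k : nat)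
  (H : 'M[C]_n) (lam : nat -> C) : Prop :=
  [/\ (forall i, (1 <= i <= k)%N -> lam i \is Num.real),
      (forall i j, (1 <= i <= k)%N -> (1 <= j <= k)%N -> lam i = lam j -> i = j),
      (forall i, (2 <= i <= k)%N -> (H - (lam i)%:M) \notin unitmx)
    & exists (b : C) (y : 'cV[C]_n),
        [/\ b != 0, y != 0,
            \prod_(2 <= i < k.+1) (H - (lam i)%:M) = b *: (y *m (map_mx Num.conj y)^T)
          & H *m y = lam 1%N *: y]].

From HB Require Import structures.
From mathcomp Require Import all_boot all_order all_algebra zify.
Set Implicit Arguments. Unset Strict Implicit. Unset Printing Implicit Defensive.
Import Order.TTheory GRing.Theory Num.Theory.
Local Open Scope ring_scope.

(* If the conditions hold, any eigenvector [u] for an eigenvalue [a] outside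
   [lam 2 .. lam k] satisfies [prod_i (H - lam i) u = prod_i (a - lam i) u <> 0], while the
   left-hand side is [b (y^* u) y]; so [u] is a multiple of [y] and [a = lam 1].  This pins
   down the spectrum, and distinctness of the [lam i] gives the count.  Conversely, write
   [H = P^* D P] with [P] unitary and [D] real diagonal; with [lam 1] the simple largest
   eigenvalue and [lam 2 .. lam k] the others, [prod_i (D - lam i)] vanishes off the single
   diagonal entry of [lam 1], so [prod_i (H - lam i)] is a multiple of [y y^*] for the
   corresponding column [y] of [P^*]. *)

Section EigenvalueField.
Variables (F : fieldType) (n : nat).
Implicit Types (A : 'M[F]_n) (a : F).

Lemma eigenvalue_nonunitmx A a : eigenvalue A a = (A - a%:M \notin unitmx).
Proof. by rewrite /eigenvalue /eigenspace -row_free_unit -kermx_eq0. Qed.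

Lemma eigenvalue_trmx A a : eigenvalue A^T a = eigenvalue A a.
Proof.
by rewrite !eigenvalue_nonunitmx -unitmx_tr linearB /= trmxK tr_scalar_mx.
Qed.

Lemma eigenvalue_colP A a :
  reflect (exists2 u : 'cV_n, A *m u = a *: u & u != 0) (eigenvalue A a).
Proof.
rewrite -eigenvalue_trmx; apply: (iffP eigenvalueP) => -[v vA v0].
  exists v^T; last by rewrite -trmx0 (inj_eq trmx_inj).
  by rewrite -[A]trmxK -trmx_mul vA linearZ.
exists v^T; last by rewrite -trmx0 (inj_eq trmx_inj).
by rewrite -trmx_mul vA linearZ.
Qed.

Lemma prod_subscalar_eigen A (r : seq F) (u : 'cV_n) a :
  A *m u = a *: u -> (\prod_(c <- r) (A - c%:M)) *m u = (\prod_(c <- r) (a - c)) *: u.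
Proof.
move=> Au; elim: r => [|c r IH]; first by rewrite !big_nil mul1mx scale1r.
rewrite !big_cons -mulmxE -mulmxA IH -scalemxAr mulmxBl Au mul_scalar_mx.
by rewrite -scalerBl scalerA mulrC.
Qed.

Lemma rank1_eigenvector (y : 'cV[F]_n) (z : 'rV[F]_n) (u : 'cV_n) c :
  c != 0 -> y *m z *m u = c *: u -> exists al, u = al *: y.
Proof.
move=> c0; rewrite -mulmxA [z *m u]mx11_scalar mul_mx_scalar => yzu.
by exists (c^-1 * (z *m u) 0 0); rewrite -scalerA yzu scalerA mulVf ?scale1r.
Qed.

Lemma eigenvalue_rank1_prod A (r : seq F) (y : 'cV_n) (z : 'rV_n) a0 a :
  \prod_(c <- r) (A - c%:M) = y *m z -> A *m y = a0 *: y ->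
  eigenvalue A a -> a = a0 \/ a \in r.
Proof.
move=> Pyz Ay /eigenvalue_colP[u Au u0].
have [ar|nar] := boolP (a \in r); [by right | left].
have pa0 : \prod_(c <- r) (a - c) != 0.
  rewrite prodf_seq_neq0; apply/allP => c cr; rewrite subr_eq0.
  by apply: contraNneq nar => ->.
have yzu : y *m z *m u = \prod_(c <- r) (a - c) *: u.
  by rewrite -Pyz (prod_subscalar_eigen _ Au).
have [al uy] := rank1_eigenvector pa0 yzu.
have : (a - a0) *: u = 0.
  by rewrite scalerBl -Au {1}uy -scalemxAr Ay scalerA mulrC -scalerA -uy subrr.
by move/eqP; rewrite scaler_eq0 (negbTE u0) orbF subr_eq0 => /eqP.
Qed.

End EigenvalueField.

Section Diagonalized.
Variables (F : fieldType) (n : nat) (P : 'M[F]_n) (d : 'rV[F]_n).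
Hypothesis P_unit : P \in unitmx.

Lemma char_poly_conj (A : 'M[F]_n) : char_poly (invmx P *m A *m P) = char_poly A.
Proof.
have PiP : map_mx polyC (invmx P) *m map_mx polyC P = 1%:M :> 'M[{poly F}]_n.
  by rewrite -map_mxM mulVmx // map_mx1.
have eX : 'X%:M = map_mx polyC (invmx P) *m 'X%:M *m map_mx polyC P :> 'M_n.
  by rewrite mul_mx_scalar -scalemxAl PiP scalemx1.
rewrite /char_poly /char_poly_mx {1}eX !map_mxM -mulmxBl -mulmxBr !det_mulmx.
by rewrite mulrAC -det_mulmx PiP det1 mul1r.
Qed.

Lemma char_poly_diag : char_poly (diag_mx d) = \prod_i ('X - (d 0 i)%:P).
Proof.
rewrite char_poly_trig ?diag_mx_is_trig //; apply: eq_bigr => i _.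
by rewrite !mxE eqxx mulr1n.
Qed.

Lemma eigenvalue_conj_diag a :
  eigenvalue (invmx P *m diag_mx d *m P) a <-> exists j, d 0 j = a.
Proof.
rewrite eigenvalue_root_char char_poly_conj char_poly_diag /root horner_prod.
split=> [/prodf_eq0[j _]|[j <-]]; last first.
  by apply/prodf_eq0; exists j; rewrite // hornerXsubC subrr.
by rewrite hornerXsubC subr_eq0 => /eqP ->; exists j.
Qed.

Lemma mup1_diag_index_uniq a i j :
  mup a (char_poly (diag_mx d)) = 1%N -> d 0 i = a -> d 0 j = a -> i = j.
Proof.
move=> mup1 di dj; apply/eqP; apply: contraT => nij.
have : (2 <= mup a (char_poly (diag_mx d)))%N; last by rewrite mup1.
have nz : \prod_l ('X - (d 0 l)%:P) != 0.
  by apply/prodf_neq0 => l _; rewrite polyXsubC_eq0.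
rewrite char_poly_diag mup_geq // (bigD1 i) //= (bigD1 j) /=; last by rewrite eq_sym.
by rewrite mulrA di dj expr2 dvdp_mulr.
Qed.

Lemma prod_conj_diag_subscalar (r : seq F) :
  \prod_(c <- r) (invmx P *m diag_mx d *m P - c%:M) =
  invmx P *m diag_mx (\row_j \prod_(c <- r) (d 0 j - c)) *m P.
Proof.
have PiP := mulVmx P_unit; have PPi := mulmxV P_unit.
elim: r => [|c r IH].
  have -> : diag_mx (\row_j \prod_(c <- [::]) (d 0 j - c)) = 1%:M.
    by apply/matrixP => i j; rewrite !mxE big_nil.
  by rewrite big_nil mulmx1 PiP.
rewrite big_cons IH.
have -> : c%:M = invmx P *m c%:M *m P :> 'M_n.
  by rewrite mul_mx_scalar -scalemxAl PiP scalemx1.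
rewrite -mulmxE -mulmxBl -mulmxBr !mulmxA -[_ *m P *m invmx P]mulmxA PPi mulmx1.
rewrite -!mulmxA; congr (_ *m _); rewrite mulmxA; congr (_ *m _).
apply/matrixP => i j; rewrite mul_mx_diag !mxE big_cons.
by case: eqP => [->|]; rewrite ?mulr1n ?mulr0n ?subr0 ?mul0r.
Qed.

Lemma conj_diag_eigenvector j :
  invmx P *m diag_mx d *m P *m (invmx P *m delta_mx j 0 : 'cV_n) =
  d 0 j *: (invmx P *m delta_mx j 0).
Proof.
have dj : diag_mx d *m delta_mx j 0 = d 0 j *: delta_mx j (0 : 'I_1) :> 'cV_n.
  by apply/matrixP=> i l; rewrite mul_diag_mx !mxE; case: eqP => [->|]; rewrite ?mulr0.
rewrite !mulmxA -[_ *m P *m invmx P]mulmxA mulmxV // mulmx1.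
by rewrite -mulmxA dj scalemxAr.
Qed.

Lemma conj_delta_neq0 j : invmx P *m delta_mx j 0 != 0 :> 'cV_n.
Proof.
apply: contraTneq isT => /(congr1 (mulmx P)); rewrite mulKVmx // mulmx0.
by move/matrixP/(_ j 0); rewrite !mxE !eqxx => /eqP; rewrite oner_eq0.
Qed.

End Diagonalized.

Lemma diag_mx_delta (R : pzRingType) n (e : 'rV[R]_n) j0 :
  (forall j, j != j0 -> e 0 j = 0) -> diag_mx e = e 0 j0 *: delta_mx j0 j0.
Proof.
move=> e0; apply/matrixP => i j; rewrite !mxE.
have [<-|nij] := eqVneq i j; last first.
  rewrite mulr0n (_ : (i == j0) && (j == j0) = false) ?mulr0 //.
  by apply: contraNF nij => /andP[/eqP -> /eqP ->].
by rewrite mulr1n andbb; have [->|/e0 ->] := eqVneq i j0; rewrite ?mulr1 ?mulr0.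
Qed.

Lemma unitary_invmx_delta_adj (C : numClosedFieldType) n (P : 'M[C]_n) j :
  P \is unitarymx ->
  (map_mx Num.conj (invmx P *m delta_mx j 0 : 'cV_n))^T = delta_mx 0 j *m P.
Proof.
move=> Pu; rewrite invmx_unitary // map_mxM map_delta_mx -map_mx_comp.
by rewrite map_mx_id => [|x /=]; rewrite ?conjCK // trmx_mul trmx_delta trmxK.
Qed.

Lemma nth_pred_inj (T : eqType) (x0 : T) (t : seq T) i j : uniq t ->
  (1 <= i <= size t)%N -> (1 <= j <= size t)%N ->
  nth x0 t i.-1 = nth x0 t j.-1 -> i = j.
Proof.
by move=> ut ik jk /eqP; rewrite nth_uniq //; [move/eqP; lia | lia | lia].
Qed.

Lemma big_nth_behead (T R : Type) (x0 : T) (t : seq T) (idx : R)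
    (op : R -> R -> R) (F : T -> R) :
  \big[op/idx]_(2 <= i < (size t).+1) F (nth x0 t i.-1) = \big[op/idx]_(a <- behead t) F a.
Proof.
case: t => [|a s] /=; first by rewrite big_geq // big_nil.
rewrite /index_iota subn2 /= (iotaDl 2 0) big_map.
by rewrite -[in RHS](mkseq_nth x0 s) /mkseq big_map.
Qed.

Lemma eig_conditions_eigenvalueP (C : numClosedFieldType) n (H : 'M[C]_n) k lam :
  (1 <= k)%N -> eig_conditions k H lam ->
  forall a, eigenvalue H a <-> exists2 i, (1 <= i <= k)%N & a = lam i.
Proof.
move=> k1 [_ _ sing [b [y [_ y0 Pyy Hy]]]] a; split.
  rewrite -(big_map lam xpredT (fun c => H - c%:M)) scalemxAr in Pyy.
  move=> /(eigenvalue_rank1_prod Pyy Hy) [->|/mapP[i]].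
    by exists 1%N; rewrite ?leqnn.
  by rewrite mem_index_iota => ik ->; exists i => //; lia.
move=> [i ik ->]; have [i1|i2] : i = 1%N \/ (2 <= i <= k)%N by lia.
  by rewrite i1; apply/eigenvalue_colP; exists y.
by rewrite eigenvalue_nonunitmx; apply: sing.
Qed.

Lemma eig_conditions_distinct (C : numClosedFieldType) n (H : 'M[C]_n) k lam :
  (1 <= k)%N -> eig_conditions k H lam -> has_k_distinct_eigenvalues k H.
Proof.
move=> k1 c; exists [seq lam i | i <- iota 1 k]; split.
- rewrite map_inj_in_uniq ?iota_uniq // => i j; rewrite !mem_iota => ik jk.
  by case: c => _ inj _ _; apply: inj; lia.
- by rewrite size_map size_iota.
move=> a; rewrite (eig_conditions_eigenvalueP k1 c); split.
  by move=> [i ik ->]; apply: map_f; rewrite mem_iota; lia.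
by move=> /mapP[i]; rewrite mem_iota => ik ->; exists i => //; lia.
Qed.

Section HermitianSpectral.
Variables (C : numClosedFieldType) (n : nat) (H : 'M[C]_n).
Hypothesis H_herm : H \is hermsymmx.
Let P := spectralmx H.
Let d := spectral_diag H.

Lemma hermitian_spectralE : H = invmx P *m diag_mx d *m P.
Proof. exact/orthomx_spectralP/hermitian_normalmx. Qed.

Lemma eigenvalue_hermitianP a : eigenvalue H a <-> exists j, d 0 j = a.
Proof. by rewrite hermitian_spectralE; apply/eigenvalue_conj_diag/spectral_unit. Qed.

Lemma eigenvalue_hermitian_real a : eigenvalue H a -> a \is Num.real.
Proof.
move=> /eigenvalue_hermitianP[j <-].
exact: (mxOverP (hermitian_spectral_diag_real H_herm)).
Qed.

(* In the spectral basis the product is diagonal with a single nonzero entry, at the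
   unique position [j0] of the simple eigenvalue; [P^-1 = P^*] turns it into [b y y^*]. *)
Lemma hermitian_prod_rank1 rho j0 (r : seq C) :
  mup rho (char_poly H) = 1%N -> d 0 j0 = rho ->
  (forall a, eigenvalue H a -> a != rho -> a \in r) ->
  let y := invmx P *m delta_mx j0 0 : 'cV_n in
  \prod_(a <- r) (H - a%:M) = \prod_(a <- r) (rho - a) *: (y *m (map_mx Num.conj y)^T).
Proof.
move=> mup1 dj0 r_eig y; have Pu := spectral_unit H.
have simple j : d 0 j = rho -> j = j0.
  move=> dj; apply: (mup1_diag_index_uniq _ dj dj0).
  by rewrite -(char_poly_conj Pu) -hermitian_spectralE.
rewrite {1}hermitian_spectralE prod_conj_diag_subscalar // (diag_mx_delta (j0 := j0)).
  rewrite !mxE dj0 /y unitary_invmx_delta_adj ?spectral_unitarymx //.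
  by rewrite mulmxA -[_ *m delta_mx 0 j0]mulmxA mul_delta_mx -scalemxAr -scalemxAl.
move=> j jj0; rewrite mxE; apply/eqP; rewrite prodf_seq_eq0; apply/hasP.
exists (d 0 j); last by rewrite subrr eqxx.
apply: r_eig; first by apply/eigenvalue_hermitianP; exists j.
by apply: contra_neq jj0 => /simple.
Qed.

Lemma hermitian_eig_conditions k :
  simple_spectral_radius H -> has_k_distinct_eigenvalues k H ->
  exists lam, eig_conditions k H lam.
Proof.
move=> [rho [erho _ mup1]] [s [us sk seig]].
have [j0 dj0] := (eigenvalue_hermitianP rho).1 erho.
have rho_s : rho \in s by apply/seig.
pose t := rho :: rem rho s.
have ut : uniq t by rewrite /= mem_rem_uniqF // rem_uniq.
have tk : size t = k by rewrite -(perm_size (perm_to_rem rho_s)).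
pose lam i := nth 0 t i.-1.
have lam_eig i : (1 <= i <= k)%N -> eigenvalue H (lam i).
  move=> ik; apply/seig; rewrite (perm_mem (perm_to_rem rho_s)) mem_nth // tk; lia.
exists lam; split.
- by move=> i /lam_eig /eigenvalue_hermitian_real.
- by move=> i j ik jk /nth_pred_inj; apply; rewrite ?tk.
- by move=> i ik; rewrite -eigenvalue_nonunitmx lam_eig //; lia.
exists (\prod_(a <- rem rho s) (rho - a)), (invmx P *m delta_mx j0 0); split.
- rewrite prodf_seq_neq0; apply/allP => a ar; rewrite subr_eq0.
  by apply: contraTneq ar => <-; rewrite mem_rem_uniqF.
- exact/conj_delta_neq0/spectral_unit.
- rewrite -tk (big_nth_behead 0 t _ _ (fun a => H - a%:M)).
  apply: hermitian_prod_rank1 => // a ea arho.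
  by rewrite mem_rem_uniq // inE arho; apply/seig.
by rewrite {1}hermitian_spectralE conj_diag_eigenvector ?spectral_unit // dj0.
Qed.

End HermitianSpectral.

Theorem theorem2p6 (C : numClosedFieldType) (n : nat) (H : 'M[C]_n) (k : nat) :
  H \is hermsymmx ->
  simple_spectral_radius H ->
  (2 <= k <= n)%N ->
  (has_k_distinct_eigenvalues k H <-> exists lam : nat -> C, eig_conditions k H lam)
  /\ (forall lam : nat -> C, eig_conditions k H lam ->
        forall a, eigenvalue H a <-> exists2 i, (1 <= i <= k)%N & a = lam i).
Proof.
move=> Hh simple /andP[k2 _]; have k1 := ltnW k2.
split; last by move=> lam; apply: eig_conditions_eigenvalueP.
split; first exact: hermitian_eig_conditions Hh k simple.
by move=> [lam c]; apply: eig_conditions_distinct c.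
Qed.
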